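(* Let $t_1, t_2 \in \mathsf{Topo}$ and let $f$ embed $t_1$ inside $t_2$. For every $q \in \mathsf{PIFOTree}(t_1)$, if $\mathsf{pop}(q)$ is defined, then so is $\mathsf{pop}(\widehat f(q))$.
   Context: Fix a set $\mathsf{Pkt}$ of packets and a totally ordered set $\mathsf{Rk}$ of ranks (smaller is more favorable). PIFOs: for a set $S$, a PIFO over $S$ is a finite sequence of pairs $(s,r)\in S\times\mathsf{Rk}$ in insertion order; $\mathsf{PIFO}(S)$ is the set of these. $\mathsf{pop}_{\mathsf{PIFO}}(p)$ is undefined if $p$ is empty; otherwise it removes the entry of minimal rank (earliest-inserted among ties) and returns $(s,p')$, its element and the rest. Topologies: $\mathsf{Topo}$ is the smallest set with $*\in\mathsf{Topo}$ and $\mathsf{Node}(\vec t)\in\mathsf{Topo}$ for $n\in\mathbb{N}$, $\vec t\in\mathsf{Topo}^n$. PIFO trees: $\mathsf{Leaf}(p)\in\mathsf{PIFOTree}( * )$ for $p\in\mathsf{PIFO}(\mathsf{Pkt})$; $\mathsf{Internal}(\vec q,p)\in\mathsf{PIFOTree}(\mathsf{Node}(\vec t))$ whenever $\vec t\in\mathsf{Topo}^n$, $p\in\mathsf{PIFO}(\{1,\dots,n\})$, $\vec q[i]\in\mathsf{PIFOTree}(\vec t[i])$. $\vec q[q'/i]$ replaces the $i$-th entry by $q'$. pop (partial): $\mathsf{pop}(\mathsf{Leaf}(p))=(pkt,\mathsf{Leaf}(p'))$ if $\mathsf{pop}_{\mathsf{PIFO}}(p)=(pkt,p')$; $\mathsf{pop}(\mathsf{Internal}(\vec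 q,p))=(pkt,\mathsf{Internal}(\vec q[q'/i],p'))$ if $\mathsf{pop}_{\mathsf{PIFO}}(p)=(i,p')$ and $\mathsf{pop}(\vec q[i])=(pkt,q')$; undefined otherwise. Addresses: $\mathsf{Addr}(t)\subseteq\mathbb{N}^*$ is the smallest set with $\epsilon\in\mathsf{Addr}(t)$ and $i\cdot\alpha\in\mathsf{Addr}(\mathsf{Node}(\vec t))$ for $1\le i\le n$, $\alpha\in\mathsf{Addr}(\vec t[i])$. Subtrees: $t/\epsilon=t$, $\mathsf{Node}(\vec t)/(i\cdot\alpha)=\vec t[i]/\alpha$. An embedding of $t_1$ in $t_2$ is an injective $f:\mathsf{Addr}(t_1)\to\mathsf{Addr}(t_2)$ with $f(\epsilon)=\epsilon$, $t_2/f(\alpha)=*$ whenever $t_1/\alpha=*$, and $\alpha$ a prefix of $\alpha'$ iff $f(\alpha)$ a prefix of $f(\alpha')$. If $t_1=*$ then $t_2=*$; if $t_1=\mathsf{Node}(\vec t_1)$, the map $f_i$ defined by $f(i\cdot\alpha)=f(i)\cdot f_i(\alpha)$ is an embedding of $t_1/i$ in $t_2/f(i)$. Lifting $\widehat f:\mathsf{PIFOTree}(t_1)\to\mathsf{PIFOTree}(t_2)$, by recursion on $t_1$: if $t_1=*$, $\widehat f(q)=q$. If $t_1=\mathsf{Node}(\vec t_1)$ with $n$ children and $q=\mathsf{Internal}(\vec q,p)$, define for each address $\alpha$ of $t_2$ that is a prefix of some $f(i)$ a tree $\widehat f(q)_\alpha\in\mathsf{PIFOTree}(t_2/\alpha)$,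 from longer to shorter $\alpha$: if $\alpha=f(i)$, $\widehat f(q)_\alpha=\widehat{f_i}(\vec q[i])$; otherwise $t_2/\alpha$ has some $m$ children and $\widehat f(q)_\alpha=\mathsf{Internal}(\vec q_\alpha,p_\alpha)$, where $\vec q_\alpha[j]=\widehat f(q)_{\alpha\cdot j}$ if $\alpha\cdot j$ is a prefix of some $f(i)$ and otherwise $\vec q_\alpha[j]$ is the tree of topology $t_2/(\alpha\cdot j)$ with all PIFOs empty; and $p_\alpha$ is obtained from $p$ by replacing each entry $(i,r)$ by $(j,r)$ where $\alpha\cdot j$ is a prefix of $f(i)$, deleting entries for which no such $j$ exists, keeping the order. Finally $\widehat f(q)=\widehat f(q)_\epsilon$. *)

From mathcomp Require Import all_boot all_order.
Set Implicit Arguments. Unset Strict Implicit. Unset Printing Implicit Defensive.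
Import Order.TTheory.

Inductive Topo : Type := Star | Node of seq Topo.

(* Addresses: child indices are 1-based, as in the paper. *)
Fixpoint in_addr (t : Topo) (a : seq nat) : bool :=
  match a with
  | [::] => true
  | i :: a' => if t is Node ts then (0 < i <= size ts) && in_addr (nth Star ts i.-1) a'
               else false
  end.

(* t / alpha (only meaningful for alpha in Addr t; defaults to Star otherwise) *)
Fixpoint subtopo (t : Topo) (a : seq nat) : Topo :=
  match a with
  | [::] => t
  | i :: a' => if t is Node ts then subtopo (nth Star ts i.-1) a' else Star
  end.

Definition is_embedding (t1 t2 : Topo) (f : seq nat -> seq nat) : Prop :=
  [/\ f [::] = [::],
      (forall a, in_addr t1 a -> in_addr t2 (f a)),
      (forall a b, in_addr t1 a -> in_addr t1 b -> f a = f b -> a = b),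
      (forall a, in_addr t1 a -> subtopo t1 a = Star -> subtopo t2 (f a) = Star) &
      (forall a b, in_addr t1 a -> in_addr t1 b -> prefix a b = prefix (f a) (f b))].

(* f_i : f (i . alpha) = f (i) . f_i (alpha) *)
Definition sub_emb (f : seq nat -> seq nat) (i : nat) : seq nat -> seq nat :=
  fun a => drop (size (f [:: i])) (f (i :: a)).

Section PIFO.
Context {d : Order.disp_t} (Rk : orderType d) (Pkt : Type).


(* PIFOs: sequences of (element, rank) in insertion order. *)
Definition PIFO (S : Type) := seq (S * Rk).

(* pop of a PIFO: remove the entry of minimal rank, earliest among ties;
   returns the removed entry (element and rank) and the rest. *)
Fixpoint pop_entry {S : Type} (p : PIFO S) : option ((S * Rk) * PIFO S) :=
  match p with
  | [::] => None
  | e :: p' =>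
      match pop_entry p' with
      | None => Some (e, [::])
      | Some (e', p'') => if (e.2 <= e'.2)%O then Some (e, p') else Some (e', e :: p'')
      end
  end.

Definition pop_PIFO {S : Type} (p : PIFO S) : option (S * PIFO S) :=
  omap (fun ep => (ep.1.1, ep.2)) (pop_entry p).

(* Untyped PIFO trees; typing by a topology is given by [typed] below. *)
Inductive PTree : Type :=
| Leaf of PIFO Pkt
| Internal of seq PTree & PIFO nat.

Inductive typed : Topo -> PTree -> Prop :=
| typed_leaf (p : PIFO Pkt) : typed Star (Leaf p)
| typed_internal (ts : seq Topo) (qs : seq PTree) (p : PIFO nat) :
    size qs = size ts ->
    (forall k, k < size ts -> typed (nth Star ts k) (nth (Leaf [::]) qs k)) ->
    (forall e, e \in map fst p -> (0 < e <= size ts)%N) ->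
    typed (Node ts) (Internal qs p).

Fixpoint pop (q : PTree) : option (Pkt * PTree) :=
  match q with
  | Leaf p => omap (fun r => (r.1, Leaf r.2)) (pop_PIFO p)
  | Internal qs p =>
      match pop_PIFO p with
      | None => None
      | Some (i, p') =>
          let fix go (l : seq PTree) (k : nat) : option (Pkt * seq PTree) :=
            match l with
            | [::] => None
            | c :: l' =>
                match k with
                | 0 => None
                | 1 => omap (fun r => (r.1, r.2 :: l')) (pop c)
                | k'.+1 => omap (fun r => (r.1, c :: r.2)) (go l' k')
                end
            end in
          omap (fun r => (r.1, Internal r.2 p')) (go qs i)
      end
  end.

Fixpoint empty_tree (t : Topo) : PTree :=
  match t with
  | Star => Leaf [::]
  | Node ts => Internal (map empty_tree ts) [::]
  end.

Definition child_toward (a b : seq nat) : option nat :=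
  if prefix a b && (size a < size b) then Some (nth 0 b (size a)) else None.

(* p_alpha: replace (i, r) by (j, r) where alpha . j is a prefix of f(i),
   deleting entries with no such j, keeping the order. *)
Definition restrict_pifo (fs : seq (seq nat)) (a : seq nat) (p : PIFO nat) : PIFO nat :=
  pmap (fun e : nat * Rk => omap (fun j => (j, e.2)) (child_toward a (nth [::] fs e.1.-1))) p.

(* Construction of \hat f(q)_alpha, for the subtree t = t2 / alpha.
   fs = [f(1); ...; f(n)], L = [\hat{f_1}(q_1); ...; \hat{f_n}(q_n)], p the root PIFO. *)
Fixpoint build (fs : seq (seq nat)) (L : seq PTree) (p : PIFO nat)
    (t : Topo) (a : seq nat) : PTree :=
  let idx := find (pred1 a) fs in
  if idx < size fs then nth (Leaf [::]) L idx
  else match t with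
       | Star => Leaf [::]
       | Node ts =>
           let fix go (l : seq Topo) (j : nat) : seq PTree :=
             match l with
             | [::] => [::]
             | tj :: l' =>
                 (if has (prefix (rcons a j)) fs then build fs L p tj (rcons a j)
                  else empty_tree tj) :: go l' j.+1
             end in
           Internal (go ts 1) (restrict_pifo fs a p)
       end.

Fixpoint lift_pt (t2 : Topo) (f : seq nat -> seq nat) (q : PTree) : PTree :=
  match q with
  | Leaf p => Leaf p
  | Internal qs p =>
      let fix go (l : seq PTree) (k : nat) : seq PTree :=
        match l with
        | [::] => [::]
        | c :: l' => lift_pt (subtopo t2 (f [:: k])) (sub_emb f k) c :: go l' k.+1
        end in
      build [seq f [:: i] | i <- iota 1 (size qs)] (go qs 1) p t2 [::]
  end.

End PIFO.

(* If pop q succeeds, the root PIFO of q pops some child i whose subtree pops.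
   In the lifted tree each node alpha on the path from the root to f(i) carries
   the root PIFO restricted to the entries whose image lies below alpha, in the
   original order and with the original ranks; so the earliest entry of minimal
   rank, (i, r), survives as the earliest entry of minimal rank there, and it
   points to the next node of the path.  The lifted pop therefore walks down to
   f(i), where it meets the lift of the i-th subtree, which pops by induction.
   Of the embedding only two properties are used: addresses go to addresses,
   and the prefix order is preserved and reflected, which makes f(i) the only
   image of a child of the root lying on that path. *)

From Stdlib Require Import Setoid.
From mathcomp Require Import all_boot all_order.
Set Implicit Arguments. Unset Strict Implicit. Unset Printing Implicit Defensive.
Import Order.TTheory.

Lemma in_addr_cat t b c : in_addr t (b ++ c) = in_addr t b && in_addr (subtopo t b) c.
Proof. by elim: b t => [|x b IH] [|ts] //=; rewrite IH andbA. Qed.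

Lemma subtopo_cat t b c : subtopo t (b ++ c) = subtopo (subtopo t b) c.
Proof. by elim: b t => [|x b IH] [|ts] //=; case: (c). Qed.

Definition prefix_embedding (t1 t2 : Topo) (f : seq nat -> seq nat) : Prop :=
  (forall a, in_addr t1 a -> in_addr t2 (f a)) /\
  (forall a b, in_addr t1 a -> in_addr t1 b -> prefix a b = prefix (f a) (f b)).

Lemma embedding_prefix_embedding t1 t2 f :
  is_embedding t1 t2 f -> prefix_embedding t1 t2 f.
Proof. by case. Qed.

Section SubEmbedding.
Variables (ts : seq Topo) (t2 : Topo) (f : seq nat -> seq nat) (i : nat).
Hypotheses (f_emb : prefix_embedding (Node ts) t2 f) (i_in : 0 < i <= size ts).

Let in_addr_cons a : in_addr (Node ts) (i :: a) = in_addr (nth Star ts i.-1) a.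
Proof. by rewrite /= i_in. Qed.

Lemma sub_emb_cat a :
  in_addr (nth Star ts i.-1) a -> f (i :: a) = f [:: i] ++ sub_emb f i a.
Proof.
case: f_emb => _ f_prefix a_in.
have i_addr : in_addr (Node ts) [:: i] by rewrite in_addr_cons; case: (nth _ _ _).
have : prefix (f [:: i]) (f (i :: a)).
  by rewrite -f_prefix ?in_addr_cons //= eqxx prefix0s.
by rewrite /sub_emb => /prefixP[s ->]; rewrite drop_size_cat.
Qed.

Lemma prefix_embedding_sub_emb :
  prefix_embedding (nth Star ts i.-1) (subtopo t2 (f [:: i])) (sub_emb f i).
Proof.
case: f_emb => f_addr f_prefix; split=> [a a_in | a b a_in b_in].
  have := f_addr (i :: a); rewrite in_addr_cons (sub_emb_cat a_in) in_addr_cat.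
  by move=> /(_ a_in) /andP[].
have := f_prefix (i :: a) (i :: b).
rewrite !in_addr_cons (sub_emb_cat a_in) (sub_emb_cat b_in).
by rewrite prefix_cons prefix_catr // !eqxx /= => ->.
Qed.
End SubEmbedding.

Section PifoPop.
Context {d : Order.disp_t} (Rk : orderType d).

Lemma pop_entry_None (S : Type) (p : PIFO Rk S) : pop_entry p = None -> p = [::].
Proof. by case: p => //= x p; case: (pop_entry p) => [[? ?]|] //; case: ifP. Qed.

Lemma all_pop_entry (S : Type) (P : pred (S * Rk)) (p : PIFO Rk S) e p' :
  all P p -> pop_entry p = Some (e, p') -> P e.
Proof.
elim: p e p' => [|x p IH] e p' //= /andP[Px Pp].
case E: (pop_entry p) => [[e1 p1]|]; last by case=> <-.
by case: ifP => _ [<- _] //; apply: IH E.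
Qed.

Lemma pop_entry_min (S : Type) (p : PIFO Rk S) e p' :
  pop_entry p = Some (e, p') -> all (fun x => e.2 <= x.2)%O p.
Proof.
elim: p e p' => [|x p IH] e p' //=.
case E: (pop_entry p) => [[e1 p1]|]; last by case=> <-; rewrite lexx (pop_entry_None E).
have e1_min := IH _ _ E.
case: ifP => x_le [<- _]; rewrite ?lexx /=.
  by apply: sub_all e1_min => y; apply: le_trans.
by rewrite e1_min andbT ltW // ltNge x_le.
Qed.

Lemma pop_entry_pmap (S T : Type) (g : S * Rk -> option (T * Rk)) (p : PIFO Rk S)
    e p' e' :
  (forall x y, g x = Some y -> y.2 = x.2) ->
  pop_entry p = Some (e, p') -> g e = Some e' ->
  exists p'', pop_entry (pmap g p) = Some (e', p'').
Proof.
move=> g_rank; elim: p e p' => [|x p IH] e p' //=.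
case E: (pop_entry p) => [[e1 p1]|]; last first.
  by case=> <- _ ->; rewrite (pop_entry_None E) /=; eexists.
case: ifP => x_le [<- _] ge.
  rewrite /= ge /=; case E': (pop_entry (pmap g p)) => [[e2 p2]|]; last by eexists.
  have e'_lower : all (fun y : T * Rk => e'.2 <= y.2)%O (pmap g p).
    rewrite all_pmap; apply: sub_all (pop_entry_min E) => y /= e1_le.
    case gy: (g y) => [z|] //=.
    by rewrite (g_rank _ _ gy) (g_rank _ _ ge) (le_trans x_le).
  by rewrite (all_pop_entry e'_lower E'); eexists.
have [p'' E'] := IH _ _ E ge.
case gx: (g x) => [x'|] /=; rewrite E'; last by eexists.
by rewrite (g_rank _ _ gx) (g_rank _ _ ge) x_le; eexists.
Qed.

End PifoPop.

Section TreeUnfolding.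
Context {d : Order.disp_t} (Rk : orderType d) (Pkt : Type).
Notation PT := (PTree Rk Pkt).

(* Named copies of the local [fix go] of [pop], [build] and [lift_pt]; they are
   convertible to the local ones, so [pop_Internal] and [lift_Internal] hold by [[]]. *)
Fixpoint pop_child (l : seq PT) (k : nat) : option (Pkt * seq PT) :=
  match l with
  | [::] => None
  | c :: l' =>
      match k with
      | 0 => None
      | 1 => omap (fun r => (r.1, r.2 :: l')) (pop c)
      | k'.+1 => omap (fun r => (r.1, c :: r.2)) (pop_child l' k')
      end
  end.

Lemma pop_Internal qs (p : PIFO Rk nat) : pop (Internal qs p) =
  if pop_PIFO p is Some (i, p') then
    omap (fun r => (r.1, Internal r.2 p')) (pop_child qs i)
  else None.
Proof. by []. Qed.

Lemma omap_neq_None (A B : Type) (g : A -> B) o : omap g o <> None <-> o <> None.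
Proof. by case: o. Qed.

Lemma pop_child_neq_None l k : pop_child l k <> None <->
  0 < k <= size l /\ pop (nth (Leaf [::] : PT) l k.-1) <> None.
Proof.
elim: l k => [|c l IH] [|[|k]] /=; try by split=> [|[]].
  by rewrite omap_neq_None; split=> [|[]].
by rewrite omap_neq_None IH.
Qed.

Definition build_children (fs : seq (seq nat)) (L : seq PT) (p : PIFO Rk nat)
    (a : seq nat) :=
  fix go (l : seq Topo) (j : nat) : seq PT :=
  match l with
  | [::] => [::]
  | tj :: l' =>
      (if has (prefix (rcons a j)) fs then build fs L p tj (rcons a j)
       else empty_tree Rk Pkt tj) :: go l' j.+1
  end.

Lemma build_index fs L p t a : a \in fs ->
  build fs L p t a = nth (Leaf [::] : PT) L (index a fs).
Proof. by rewrite -index_mem; case: t => [|ts] /= ->. Qed.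

Lemma build_notin fs L p ts a : a \notin fs ->
  build fs L p (Node ts) a =
  Internal (build_children fs L p a ts 1) (restrict_pifo fs a p).
Proof. by rewrite -index_mem /= ltnNge => /negbNE ->. Qed.

Lemma size_build_children fs L p a l j : size (build_children fs L p a l j) = size l.
Proof. by elim: l j => //= t l IH j; rewrite IH. Qed.

Lemma nth_build_children fs L p a l j k : k < size l ->
  nth (Leaf [::] : PT) (build_children fs L p a l j) k =
  if has (prefix (rcons a (j + k))) fs
  then build fs L p (nth Star l k) (rcons a (j + k))
  else empty_tree Rk Pkt (nth Star l k).
Proof.
elim: l j k => [|t l IH] j [|k] //=; first by rewrite addn0.
by move=> lt_k; rewrite IH // addSnnS.
Qed.

Definition lift_children (t2 : Topo) (f : seq nat -> seq nat) :=
  fix go (l : seq PT) (k : nat) : seq PT :=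
  match l with
  | [::] => [::]
  | c :: l' => lift_pt (subtopo t2 (f [:: k])) (sub_emb f k) c :: go l' k.+1
  end.

Lemma lift_Internal t2 f qs p : lift_pt t2 f (Internal qs p) =
  build [seq f [:: i] | i <- iota 1 (size qs)] (lift_children t2 f qs 1) p t2 [::].
Proof. by []. Qed.

Lemma nth_lift_children t2 f l j k : k < size l ->
  nth (Leaf [::] : PT) (lift_children t2 f l j) k =
  lift_pt (subtopo t2 (f [:: j + k])) (sub_emb f (j + k)) (nth (Leaf [::] : PT) l k).
Proof.
elim: l j k => [|t l IH] j [|k] //=; first by rewrite addn0.
by move=> lt_k; rewrite IH // addSnnS.
Qed.

End TreeUnfolding.

Section PopAlongPath.
Context {d : Order.disp_t} (Rk : orderType d) (Pkt : Type).
Notation PT := (PTree Rk Pkt).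
Variables (fs : seq (seq nat)) (L : seq PT) (p : PIFO Rk nat) (t2 : Topo)
  (i : nat) (r : Rk) (p' : PIFO Rk nat).
Local Notation fi := (nth [::] fs i.-1).
Hypotheses (p_pop : pop_entry p = Some ((i, r), p'))
  (i_lt : i.-1 < size fs)
  (fi_addr : in_addr t2 fi)
  (Li_pop : pop (nth (Leaf [::] : PT) L i.-1) <> None)
  (fi_minimal : forall k, k < size fs -> prefix (nth [::] fs k) fi -> k = i.-1).

Lemma index_fi : index fi fs = i.-1.
Proof.
have fi_in : fi \in fs by exact: mem_nth.
by apply: fi_minimal; rewrite ?index_mem ?nth_index ?prefix_refl.
Qed.

Lemma pop_build_fi t : pop (build fs L p t fi) <> None.
Proof. by rewrite build_index ?mem_nth // index_fi. Qed.

Lemma pop_entry_restrict_pifo a j s : fi = a ++ j :: s ->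
  exists p'', pop_entry (restrict_pifo fs a p) = Some ((j, r), p'').
Proof.
move=> fi_eq; apply: (pop_entry_pmap _ p_pop).
  by move=> [k rk] y /=; case: (child_toward _ _) => //= j' [<-].
rewrite /= /child_toward fi_eq prefix_prefix size_cat /= addnS ltnS leq_addr /=.
by rewrite nth_cat ltnn subnn.
Qed.

Lemma pop_build_prefix s a : fi = a ++ s -> pop (build fs L p (subtopo t2 a) a) <> None.
Proof.
elim: s a => [|j s IH] a fi_eq.
  by rewrite cats0 in fi_eq; rewrite -fi_eq; apply: pop_build_fi.
have a_notin : a \notin fs.
  apply/negP => /(nthP [::]) [k k_lt fk_a].
  have := fi_minimal k_lt; rewrite fk_a fi_eq prefix_prefix => /(_ isT) k_i.
  move/(congr1 size)/eqP: fi_eq; rewrite -fk_a k_i size_cat /=.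
  by rewrite ltn_eqF // addnS ltnS leq_addr.
have [ts t2a /andP[j_gt0 j_le]] : exists2 ts, subtopo t2 a = Node ts & 0 < j <= size ts.
  move: fi_addr; rewrite fi_eq in_addr_cat => /andP[_].
  by case: (subtopo t2 a) => [|ts] //= /andP[j_in _]; exists ts.
rewrite t2a build_notin // pop_Internal /pop_PIFO.
have [p'' ->] := pop_entry_restrict_pifo fi_eq.
rewrite /= omap_neq_None pop_child_neq_None size_build_children j_gt0 j_le.
have j_lt : j.-1 < size ts by rewrite prednK.
split=> //; rewrite nth_build_children // add1n prednK //.
have -> : has (prefix (rcons a j)) fs.
  by apply/hasP; exists fi; rewrite ?mem_nth // fi_eq -cat_rcons prefix_prefix.
have -> : nth Star ts j.-1 = subtopo t2 (rcons a j) by rewrite -cats1 subtopo_cat t2a.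
by apply: IH; rewrite fi_eq cat_rcons.
Qed.

Lemma pop_build_root : pop (build fs L p t2 [::]) <> None.
Proof. exact: (@pop_build_prefix fi [::]). Qed.

End PopAlongPath.

Lemma pop_lift_pt {d : Order.disp_t} (Rk : orderType d) (Pkt : Type)
    (t1 t2 : Topo) (f : seq nat -> seq nat) (q : PTree Rk Pkt) :
  prefix_embedding t1 t2 f -> typed t1 q ->
  pop q <> None -> pop (lift_pt t2 f q) <> None.
Proof.
move=> f_emb q_typed; elim: q_typed t2 f f_emb => [//|ts qs p size_qs _ IH _] t2 f f_emb.
rewrite pop_Internal lift_Internal /pop_PIFO.
case p_pop: (pop_entry p) => [[[i r] p']|] //=.
rewrite omap_neq_None pop_child_neq_None => -[/andP[i_gt0 i_le] qi_pop].
have [f_addr f_prefix] := f_emb.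
have i_lt : i.-1 < size qs by rewrite prednK.
have nth_fs k :
    k < size qs -> nth [::] [seq f [:: n] | n <- iota 1 (size qs)] k = f [:: k.+1].
  by move=> k_lt; rewrite (nth_map 0) ?size_iota // nth_iota.
have addr_k k : k < size qs -> in_addr (Node ts) [:: k.+1] by rewrite /= andbT -size_qs.
apply: (pop_build_root p_pop).
- by rewrite size_map size_iota.
- by rewrite nth_fs // prednK // f_addr // -(prednK i_gt0) addr_k.
- rewrite nth_lift_children // add1n prednK //; apply: IH => //; first by rewrite -size_qs.
  by apply: prefix_embedding_sub_emb; rewrite // -size_qs i_gt0.
- move=> k; rewrite size_map size_iota => k_lt.
  by rewrite !nth_fs // -f_prefix ?addr_k // prefix_cons /= andbT => /eqP[->].
Qed.

Theorem lemma5p6 (d : Order.disp_t) (Rk : orderType d) (Pkt : Type)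
    (t1 t2 : Topo) (f : seq nat -> seq nat) (q : PTree Rk Pkt) :
  is_embedding t1 t2 f ->
  typed t1 q ->
  pop q <> None ->
  pop (lift_pt t2 f q) <> None.
Proof. by move=> /embedding_prefix_embedding; apply: pop_lift_pt. Qed.
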